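(* Let $(a_1,a_2)\in\mathbb{Z}^2$ and let $x=x_1^{-a_1}x_2^{-a_2}\sum_{p,q\ge0}c(p,q)x_1^px_2^q\in\mathcal{T}_1$ be pointed at $(a_1,a_2)$, and suppose $x\in\mathcal{T}_0^{\ge0}\cap\mathcal{T}_1^{\ge0}\cap\mathcal{T}_2^{\ge0}$. Then for all $(p,q)\in\mathbb{Z}_{\ge0}^2$ the following inequality holds in $\Bbbk$: $$c(p,q)\ge\max\Big(\Big[\sum_{k=1}^p\sum_{(k_1,\ldots,k_{d_2})\vdash k}(-1)^{k-1}c(p-k_1-2k_2-\cdots-d_2k_{d_2},q)\varrho_1^{k_1}\cdots\varrho_{d_2}^{k_{d_2}}\binom{a_2-q+k-1}{a_2-q-1,k_1,\ldots,k_{d_2}}\Big]_+,$$ $$\Big[\sum_{\ell=1}^q\sum_{(\ell_1,\ldots,\ell_{d_1})\vdash\ell}(-1)^{\ell-1}c(p,q-\ell_1-2\ell_2-\cdots-d_1\ell_{d_1})\rho_1^{\ell_1}\cdots\rho_{d_1}^{\ell_{d_1}}\binom{a_1-p+\ell-1}{a_1-p-1,\ell_1,\ldots,\ell_{d_1}}\Big]_+\Big).$$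
   Context: $\Bbbk$ is an ordered field with positive cone $\Pi$ ($a\le b$ iff $b-a\in\Pi$), $[a]_+=\max(a,0)$. $P_1(z)=\sum_{t=0}^{d_1}\rho_tz^t$ and $P_2(z)=\sum_{t=0}^{d_2}\varrho_tz^t$ in $\Pi[z]$ are monic palindromic ($P(z)=z^dP(z^{-1})$, $d=\deg P$). With $x_1,x_2$ commuting indeterminates, define $x_k\in\Bbbk(x_1,x_2)$ for $k\in\mathbb{Z}$ by $x_{k+1}x_{k-1}=P_1(x_k)$ if $k$ even, $=P_2(x_k)$ if $k$ odd. $\underline\Bbbk$ is the $\mathbb{Z}$-subalgebra of $\Bbbk$ generated by the coefficients of $P_1,P_2$, $\underline\Bbbk_{\ge0}=\underline\Bbbk\cap\Pi$, $\mathcal{T}_k=\underline\Bbbk[x_k^{\pm1},x_{k+1}^{\pm1}]$, $\mathcal{T}_k^{\ge0}=\underline\Bbbk_{\ge0}[x_k^{\pm1},x_{k+1}^{\pm1}]$. Pointed at $(a_1,a_2)$ means $c(p,q)\in\underline\Bbbk$ and $c(0,0)=1$; set $c(p,q)=0$ if $p<0$ or $q<0$. Multinomial convention: for integers $n,k_0$ and $k_1,\dots,k_r\ge0$ with $k=\sum_{i\ge1}k_i$ and $n=k_0+k$, $\binom{n}{k_0,k_1,\dots,k_r}=\binom{n}{k}\frac{k!}{k_1!\cdots k_r!}$ with $\binom{n}{k}=n(n-1)\cdots(n-k+1)/k!$; $(k_1,\dots,k_r)\vdash k$ means nonnegative integers summing to $k$. *)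

From HB Require Import structures.
From mathcomp Require Import all_boot all_order all_algebra.
Set Implicit Arguments. Unset Strict Implicit. Unset Printing Implicit Defensive.
Import Order.TTheory GRing.Theory Num.Theory.
Local Open Scope ring_scope.

Section Defs.
Variable R : realFieldType.

(* The field of rational functions k(x1,x2), realised as the fraction field
   of {poly {poly R}}: x1 is the inner variable, x2 the outer one. *)
Definition ratfun := {fraction {poly {poly R}}}.
Definition cst (r : R) : ratfun := tofrac ((r%:P)%:P).
Definition X1 : ratfun := tofrac (('X)%:P).
Definition X2 : ratfun := tofrac 'X.

Definition peval (P : {poly R}) (y : ratfun) : ratfun := (map_poly cst P).[y].

(* The sequence x_k, k in Z: x_{k+1} x_{k-1} = P1(x_k) if k even, P2(x_k) if k odd. *)
Definition Pk (P1 P2 : {poly R}) (k : int) : {poly R} :=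
  if (k %% 2)%Z == 0 then P1 else P2.

(* fwd n = (x_{n+1}, x_{n+2}) *)
Fixpoint fwd (P1 P2 : {poly R}) (n : nat) : ratfun * ratfun :=
  match n with
  | 0 => (X1, X2)
  | n'.+1 => let: (a, b) := fwd P1 P2 n' in
             (b, peval (Pk P1 P2 (n'.+2)%:Z) b / a)
  end.

(* bwd n = (x_{1-n}, x_{2-n}) *)
Fixpoint bwd (P1 P2 : {poly R}) (n : nat) : ratfun * ratfun :=
  match n with
  | 0 => (X1, X2)
  | n'.+1 => let: (a, b) := bwd P1 P2 n' in
             (peval (Pk P1 P2 (1 - n'%:Z)) a / b, a)
  end.

Definition clus (P1 P2 : {poly R}) (k : int) : ratfun :=
  match k with
  | Posz n => match n with 0 => (bwd P1 P2 1).1 | n'.+1 => (fwd P1 P2 n').1 end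
  | Negz n => (bwd P1 P2 n.+2).1   (* Negz n = -(n+1), and 1 - (n+2) = -(n+1) *)
  end.

Inductive ksub (P1 P2 : {poly R}) : R -> Prop :=
  | ksub_c1 i : ksub P1 P2 P1`_i
  | ksub_c2 i : ksub P1 P2 P2`_i
  | ksub_1 : ksub P1 P2 1
  | ksub_add a b : ksub P1 P2 a -> ksub P1 P2 b -> ksub P1 P2 (a + b)
  | ksub_opp a : ksub P1 P2 a -> ksub P1 P2 (- a)
  | ksub_mul a b : ksub P1 P2 a -> ksub P1 P2 b -> ksub P1 P2 (a * b).

Definition ksub_nonneg (P1 P2 : {poly R}) (r : R) : Prop := ksub P1 P2 r /\ 0 <= r.

Definition laurent_in (S : R -> Prop) (u v x : ratfun) : Prop :=
  exists s : seq (R * int * int),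
    (forall t, t \in s -> S t.1.1) /\
    x = \sum_(t <- s) cst t.1.1 * u ^ t.1.2 * v ^ t.2.

Definition Tnonneg (P1 P2 : {poly R}) (k : int) (x : ratfun) : Prop :=
  laurent_in (ksub_nonneg P1 P2) (clus P1 P2 k) (clus P1 P2 (k + 1)) x.

Definition gbinom (n : int) (k : nat) : R :=
  (\prod_(i < k) (n - i%:Z)%:~R) / (k`!)%:R.

(* multinomial binom(n; k0, k1, ..., kr) with k = sum ks and k0 = n - k:
   binom(n, k) * k! / (k1! ... kr!) *)
Definition multinom (n : int) (ks : seq nat) : R :=
  gbinom n (sumn ks) * ((sumn ks)`!)%:R / (\prod_(j <- ks) (j`!)%:R).

Definition cZ (c : nat -> nat -> R) (p q : int) : R :=
  match p, q with Posz p', Posz q' => c p' q' | _, _ => 0 end.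

Definition pos_part (a : R) : R := Num.max a 0.

End Defs.

(* In the cluster (x0, x1) we have x0 = P2(x1)/x2, so membership of
   x = x1^-a1 x2^-a2 G(x1, x2) in T_0^{>=0} is an identity
   x1^-a1 x2^-a2 G = sum r (P2(x1)/x2)^i x1^j with r >= 0.  Clearing
   denominators and taking the coefficient of a suitable power of x2 gives
   x1^s G_q(x1) P2(x1)^M = P2(x1)^(M + a2 - q) H(x1) with H >= 0
   coefficientwise.  Palindromy and monicity give P2(0) = 1, so
   H = x1^s G_q (1 + (P2 - 1))^(q - a2); expanding this binomial series and
   then each (P2 - 1)^k by the multinomial theorem, the coefficient of
   x1^(s+p) in H is c(p,q) minus the first sum of the statement.  The second
   bound is symmetric, through x3 = P1(x2)/x1 and T_2, and c(p,q) >= 0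
   comes from T_1. *)

From HB Require Import structures.
From mathcomp Require Import all_boot all_order all_algebra.
From mathcomp Require Import zify ring.
Import Order.TTheory GRing.Theory Num.Theory.
Local Open Scope ring_scope.
Set Implicit Arguments. Unset Strict Implicit. Unset Printing Implicit Defensive.
Local Notation "x %:F" := (@FracField.tofrac _ x).

Section GeneralizedBinomial.
Variable R : realFieldType.

Lemma fact_neq0 (n : nat) : n`!%:R != 0 :> R.
Proof. by rewrite pnatr_eq0 -lt0n fact_gt0. Qed.

Lemma gbinom0 (n : int) : gbinom R n 0 = 1.
Proof. by rewrite /gbinom big_ord0 fact0 divr1. Qed.

Lemma gbinom0S (k : nat) : gbinom R 0 k.+1 = 0.
Proof. by rewrite /gbinom big_ord_recl /= subr0 !mul0r. Qed.

Lemma gbinomS (n : int) (k : nat) :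
  gbinom R (n + 1) k.+1 = gbinom R n k.+1 + gbinom R n k.
Proof.
rewrite /gbinom big_ord_recl big_ord_recr /=.
have E (i : 'I_k) : n + 1 - (lift ord0 i)%:Z = n - i%:Z by rewrite lift0 /=; lia.
under eq_bigr do rewrite E.
have k1_neq0 : k.+1%:R != 0 :> R by rewrite pnatr_eq0.
rewrite factS natrM subr0 !rmorphB !rmorphD /= rmorph1.
by field; rewrite fact_neq0 addrC natr1 k1_neq0.
Qed.

Lemma gbinomN (m : int) (k : nat) :
  gbinom R (- m) k = (-1) ^+ k * gbinom R (m + k%:Z - 1) k.
Proof.
rewrite /gbinom mulrA; congr (_ / _).
rewrite [in RHS](reindex_inj rev_ord_inj) /=.
transitivity (\prod_(j < k) - (m + j%:Z)%:~R : R).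
  by apply: eq_bigr => j _; rewrite -rmorphN /= opprD.
rewrite prodrN card_ord; congr (_ * _); apply: eq_bigr => j _.
congr (_%:~R); have := ltn_ord j; lia.
Qed.

End GeneralizedBinomial.

Section TruncatedBinomialSeries.
Variable R : realFieldType.
Implicit Types (f g h Y : {poly R}) (L : nat).

Lemma coef_exprM_eq0 Y g (k p : nat) : Y`_0 = 0 -> (p < k)%N -> (Y ^+ k * g)`_p = 0.
Proof.
move=> Y0 lt_pk; have /factor_theorem[Z ->] : root Y 0 by rewrite rootE horner_coef0 Y0.
by rewrite subr0 exprMn mulrAC mulrC coefXnM lt_pk.
Qed.

Definition eq_upto L f g := forall i, (i <= L)%N -> f`_i = g`_i.

Lemma eq_upto_trans L f g h : eq_upto L f g -> eq_upto L g h -> eq_upto L f h.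
Proof. by move=> e1 e2 i le_iL; rewrite e1 // e2. Qed.

Lemma eq_uptoMr L f g h : eq_upto L f g -> eq_upto L (f * h) (g * h).
Proof.
move=> e i le_iL; rewrite ![_ * h]mulrC !coefM; apply: eq_bigr => j _.
by rewrite e // (leq_trans (leq_subr _ _) le_iL).
Qed.

Definition binom_series L Y (a : int) := \sum_(k < L.+1) gbinom R a k *: Y ^+ k.

Lemma binom_series0 L Y : binom_series L Y 0 = 1.
Proof.
rewrite /binom_series big_ord_recl gbinom0 scale1r big1 ?addr0 // => i _.
by rewrite lift0 gbinom0S scale0r.
Qed.

(* Pascal's rule makes the product telescope, up to the single term of degree L.+1. *)
Lemma binom_seriesMD1 L Y (a : int) : Y`_0 = 0 ->
  eq_upto L (binom_series L Y a * (1 + Y)) (binom_series L Y (a + 1)).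
Proof.
move=> Y0.
have -> : binom_series L Y a * (1 + Y) =
    binom_series L Y (a + 1) + gbinom R a L *: Y ^+ L.+1.
  rewrite mulrDr mulr1 /binom_series mulr_suml.
  under [X in _ + X]eq_bigr do rewrite -scalerAl -exprSr.
  rewrite [X in X + _]big_ord_recl [X in _ + X]big_ord_recr [in RHS]big_ord_recl.
  rewrite /= !gbinom0 !addrA; congr (_ + _); rewrite -!addrA; congr (_ + _).
  rewrite -big_split /=.
  by apply: eq_bigr => i _; rewrite /bump add1n gbinomS scalerDl.
by move=> i le_iL; rewrite coefD coefZ -[Y ^+ _]mulr1 coef_exprM_eq0 ?mulr0 ?addr0.
Qed.

Lemma binom_seriesMXn L Y (a : int) (M : nat) : Y`_0 = 0 ->
  eq_upto L (binom_series L Y a * (1 + Y) ^+ M) (binom_series L Y (a + M%:Z)).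
Proof.
move=> Y0; elim: M => [|M IH]; first by rewrite expr0 mulr1 addr0.
rewrite exprSr mulrA; apply: eq_upto_trans (eq_uptoMr _ IH) _.
by rewrite -addn1 PoszD addrA; exact: binom_seriesMD1.
Qed.

(* H = X^s g (1 + (Q - 1))^(-m), and the truncated binomial series computes
   it up to degree s + p. *)
Lemma coef_binom_quotient (Q g H : {poly R}) (s M M' p : nat) (m : int) :
  Q`_0 = 1 -> M'%:Z = M%:Z + m -> 'X^s * g * Q ^+ M = Q ^+ M' * H ->
  H`_(s + p) = \sum_(k < (s + p).+1) gbinom R (- m) k * ((Q - 1) ^+ k * g)`_p.
Proof.
move=> Q0 eM E; set L := (s + p)%N.
have Y0 : (Q - 1)`_0 = 0 by rewrite coefB coefC Q0 subrr.
have QE : Q = 1 + (Q - 1) by rewrite addrC subrK.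
have BQM' : eq_upto L (binom_series L (Q - 1) (- M'%:Z) * Q ^+ M') 1.
  have := @binom_seriesMXn L _ (- M'%:Z) M' Y0.
  by rewrite addNr binom_series0 -QE.
have BQM : eq_upto L (binom_series L (Q - 1) (- M'%:Z) * Q ^+ M)
                     (binom_series L (Q - 1) (- m)).
  have := @binom_seriesMXn L _ (- M'%:Z) M Y0.
  by rewrite -QE {2}eM opprD addrAC addNr add0r.
transitivity ((binom_series L (Q - 1) (- M'%:Z) * Q ^+ M' * H)`_L).
  by rewrite (eq_uptoMr H BQM') // mul1r.
rewrite -mulrA -E [_ * Q ^+ M]mulrC mulrA (eq_uptoMr _ BQM) //.
rewrite mulrCA coefXnM ltnNge leq_addr /= addKn.
rewrite /binom_series mulr_suml coef_sum; apply: eq_bigr => k _.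
by rewrite -scalerAl coefZ.
Qed.

End TruncatedBinomialSeries.

Section Multinomial.

Definition fcons (T : finType) (d : nat) (t : T) (g : {ffun 'I_d -> T}) :
  {ffun 'I_d.+1 -> T} :=
  [ffun i : 'I_d.+1 => if unlift ord0 i is Some j then g j else t].

Lemma fcons0 (T : finType) d (t : T) (g : {ffun 'I_d -> T}) : fcons t g ord0 = t.
Proof. by rewrite ffunE unlift_none. Qed.

Lemma fconsS (T : finType) d (t : T) (g : {ffun 'I_d -> T}) j :
  fcons t g (lift ord0 j) = g j.
Proof. by rewrite ffunE liftK. Qed.

Lemma big_ffunS (V : nmodType) (T : finType) d
    (P : pred {ffun 'I_d.+1 -> T}) (F : {ffun 'I_d.+1 -> T} -> V) :
  \sum_(f | P f) F f =
  \sum_(t : T) \sum_(g : {ffun 'I_d -> T} | P (fcons t g)) F (fcons t g).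
Proof.
pose h (u : T * {ffun 'I_d -> T}) := fcons u.1 u.2.
pose h' (f : {ffun 'I_d.+1 -> T}) := (f ord0, [ffun j => f (lift ord0 j)]).
have hK : cancel h h'.
  by case=> t g; rewrite /h /h' /= fcons0; congr (_, _); apply/ffunP => j;
     rewrite ffunE fconsS.
have h'K : cancel h' h.
  move=> f; apply/ffunP => i; rewrite /h /h' /= ffunE.
  by case: unliftP => [j ->|->]; rewrite ?ffunE.
rewrite (reindex h); last by exists h' => u _.
by rewrite pair_big_dep /=; apply: eq_big => [[t g]|[t g] _].
Qed.

Variables (R : realFieldType) (A : comAlgType R).

Lemma multinomial_exprn (d : nat) (z : 'I_d -> A) (B k : nat) : (k <= B)%N ->
  (\sum_(i < d) z i) ^+ k =
  \sum_(ks : {ffun 'I_d -> 'I_B.+1} | (\sum_(i < d) (ks i : nat) == k)%N)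
     (k`!%:R / \prod_(i < d) (ks i)`!%:R) *: \prod_(i < d) z i ^+ ks i.
Proof.
elim: d z k => [|d IH] z k le_kB.
  rewrite big_ord0 (eq_bigl (fun=> k == 0)%N) => [|ks]; last by rewrite big_ord0.
  case: k le_kB => [|k] _; last by rewrite exprS mul0r big_pred0.
  rewrite expr0 (eq_bigr (fun=> 1)) => [|ks _]; last first.
    by rewrite !big_ord0 fact0 divr1 scale1r.
  by rewrite sumr_const card_ffun !card_ord expn0.
rewrite big_ord_recl addrC exprDn big_ffunS /=.
set S := \sum_(i < d) z (lift ord0 i).
pose H (t : nat) := S ^+ (k - t) * z ord0 ^+ t *+ 'C(k, t).
rewrite (big_ord_widen B.+1 H) ?ltnS // big_mkcond /=.
apply: eq_bigr => t _.
under eq_bigl do rewrite big_ord_recl fcons0.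
under eq_bigr do rewrite !big_ord_recl !fcons0.
have [le_tk|lt_kt] := leqP t k; last first.
  rewrite ltnS leqNgt lt_kt /= big_pred0 // => g; apply/negbTE.
  by rewrite neq_ltn (leq_trans lt_kt (leq_addr _ _)) orbT.
rewrite ltnS le_tk /H (IH _ (k - t)%N) ?(leq_trans (leq_subr _ _) le_kB) //.
rewrite mulr_suml -sumrMnl; apply: eq_big => [g|g _].
  have -> : (\sum_(i < d) fcons t g (lift ord0 i))%N = (\sum_(i < d) g i)%N.
    by apply: eq_bigr => i _; rewrite fconsS.
  by apply/eqP/eqP => [->|<-]; rewrite ?addKn // subnKC.
have -> : \prod_(i < d) (fcons t g (lift ord0 i))`!%:R = \prod_(i < d) (g i)`!%:R :> R.
  by apply: eq_bigr => i _; rewrite fconsS.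
have -> : \prod_(i < d) z (lift ord0 i) ^+ fcons t g (lift ord0 i) =
          \prod_(i < d) z (lift ord0 i) ^+ g i.
  by apply: eq_bigr => i _; rewrite fconsS.
set P := \prod_(i < d) _%:R.
have P_neq0 : P != 0 by rewrite prodf_seq_neq0; apply/allP => i _; exact: fact_neq0.
rewrite [z ord0 ^+ t * _]mulrC -scaler_nat -scalerAl scalerA -(bin_fact le_tk) !natrM.
by congr (_ *: _); field; rewrite P_neq0 !fact_neq0.
Qed.

End Multinomial.

Section ExchangeSum.
Variable R : realFieldType.
Implicit Types (Q g H : {poly R}) (f : int -> R).

(* The sums of the statement: ks i is the paper's k_(i+1), and f is c(-, q)
   (or c(p, -)) extended by 0 to negative indices. *)
Definition exchange_sum Q f (m : int) (n : nat) : R :=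
  \sum_(1 <= k < n.+1)
     \sum_(ks : {ffun 'I_(size Q).-1 -> 'I_k.+1}
           | (\sum_(i < (size Q).-1) (ks i : nat) == k)%N)
       (-1) ^+ k.-1
       * f (n%:Z - (\sum_(i < (size Q).-1) (i.+1 * ks i)%N)%:Z)
       * (\prod_(i < (size Q).-1) Q`_i.+1 ^+ ks i)
       * multinom R (m + k%:Z - 1) [seq (ks i : nat) | i <- enum 'I_(size Q).-1].

Lemma exchange_sum1 f m n : exchange_sum 1 f m n = 0.
Proof.
rewrite /exchange_sum size_poly1 big_nat big1 // => k /andP[k_gt0 _].
by rewrite big_pred0 // => ks; rewrite big_ord0 eq_sym (negbTE (lt0n_neq0 k_gt0)).
Qed.

Lemma coef0_eq1_neq0 Q : Q`_0 = 1 -> Q != 0.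
Proof. by apply: contra_eq_neq => ->; rewrite coef0 eq_sym oner_eq0. Qed.

Lemma subr1E Q : Q`_0 = 1 -> Q - 1 = \sum_(i < (size Q).-1) Q`_i.+1 *: 'X^(i.+1).
Proof.
move=> Q0; have sQ_gt0 : (0 < size Q)%N by rewrite size_poly_gt0 coef0_eq1_neq0.
rewrite -{1}[Q]coefK poly_def -(prednK sQ_gt0) big_ord_recl.
rewrite Q0 expr0 scale1r addrAC subrr add0r.
by apply: eq_bigr => i _; rewrite lift0.
Qed.

Lemma coefXnM_int f g (w p : nat) :
  (forall n : nat, f n = g`_n) -> (forall n : nat, f (Negz n) = 0) ->
  ('X^w * g)`_p = f (p%:Z - w%:Z).
Proof.
move=> fP fN; rewrite coefXnM; have [lt_pw|le_wp] := ltnP p w; last by rewrite subzn.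
by have -> : p%:Z - w%:Z = Negz (w - p).-1 by rewrite NegzE prednK ?subn_gt0 //; lia.
Qed.

Lemma coef_binom_series_exchange Q g f (m : int) (L p : nat) :
  Q`_0 = 1 -> (p <= L)%N ->
  (forall n : nat, f n = g`_n) -> (forall n : nat, f (Negz n) = 0) ->
  \sum_(k < L.+1) gbinom R (- m) k * ((Q - 1) ^+ k * g)`_p =
    g`_p - exchange_sum Q f m p.
Proof.
move=> Q0 le_pL fP fN; have Y0 : (Q - 1)`_0 = 0 by rewrite coefB coefC Q0 subrr.
set T := fun k : nat => gbinom R (- m) k * ((Q - 1) ^+ k * g)`_p.
transitivity (\sum_(k < p.+1) T k).
  rewrite [RHS](big_ord_widen L.+1 T) // [RHS]big_mkcond; apply: eq_bigr => k _.
  by case: ltnP => // lt_pk; rewrite /T coef_exprM_eq0 ?mulr0.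
rewrite -(big_mkord xpredT) big_ltn // {1}/T gbinom0 expr0 !mul1r -sumrN.
congr (_ + _); apply: eq_big_nat => k /andP[k_gt0 _].
rewrite /T subr1E // (multinomial_exprn _ (leqnn k)).
rewrite mulr_suml coef_sum mulr_sumr -sumrN; apply: eq_bigr => ks /eqP sum_ks.
have -> : \prod_(i < (size Q).-1) (Q`_i.+1 *: 'X^(i.+1)) ^+ ks i =
    (\prod_(i < (size Q).-1) Q`_i.+1 ^+ ks i) *:
      'X^(\sum_(i < (size Q).-1) (i.+1 * ks i))%N.
  under eq_bigr do rewrite exprZn -exprM.
  by rewrite scaler_prod prodrXr.
have sumn_ks : sumn [seq (ks i : nat) | i <- enum 'I_(size Q).-1] = k.
  by rewrite sumnE big_map big_enum /= sum_ks.
have prod_ks : \prod_(j <- [seq (ks i : nat) | i <- enum 'I_(size Q).-1]) j`!%:R =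
               \prod_(i < (size Q).-1) (ks i)`!%:R :> R.
  by rewrite big_map big_enum.
rewrite -!scalerAl !coefZ (coefXnM_int _ _ fP fN) /multinom sumn_ks prod_ks gbinomN.
have -> : (-1) ^+ k = - (-1) ^+ k.-1 :> R by rewrite -{1}(prednK k_gt0) exprS mulN1r.
ring.
Qed.

Lemma exchange_sum_le_coef Q g H f (s M M' p : nat) (m : int) :
  Q`_0 = 1 -> M'%:Z = M%:Z + m -> 'X^s * g * Q ^+ M = Q ^+ M' * H ->
  (forall j, 0 <= H`_j) ->
  (forall n : nat, f n = g`_n) -> (forall n : nat, f (Negz n) = 0) ->
  exchange_sum Q f m p <= g`_p.
Proof.
move=> Q0 eM E H_ge0 fP fN; rewrite -subr_ge0.
rewrite -(@coef_binom_series_exchange Q g f m (s + p) p Q0 (leq_addl _ _) fP fN).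
by rewrite -(coef_binom_quotient p Q0 eM E).
Qed.

End ExchangeSum.

Section Palindromic.
Variable R : realFieldType.

Lemma poly_eq0_nonzero_roots (p : {poly R}) :
  (forall z : R, z != 0 -> p.[z] = 0) -> p = 0.
Proof.
move=> p_root; apply: (@roots_geq_poly_eq0 _ _ (mkseq (fun i => i.+1%:R) (size p))).
- by apply/allP => _ /mapP[i _ ->]; apply/rootP/p_root; rewrite pnatr_eq0.
- by rewrite mkseq_uniq // => i j /eqP; rewrite eqr_nat => /eqP [].
- by rewrite size_mkseq.
Qed.

(* Palindromy forces the constant coefficient to be the leading one. *)
Lemma palindromic_coef0 (P : {poly R}) : P \is monic ->
  (forall z : R, z != 0 -> P.[z] = z ^+ (size P).-1 * P.[z^-1]) -> P`_0 = 1.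
Proof.
move=> P_monic P_pal; set d := (size P).-1.
have sP : size P = d.+1 by rewrite /d prednK // size_poly_gt0 monic_neq0.
have -> : P = \sum_(i < d.+1) P`_i *: 'X^(d - i).
  apply/eqP; rewrite -subr_eq0; apply/eqP/poly_eq0_nonzero_roots => z z_neq0.
  rewrite hornerD hornerN P_pal // (horner_coef_wide _ (eq_leq sP)) mulr_sumr horner_sum.
  apply/eqP; rewrite subr_eq0; apply/eqP/eq_bigr => i _.
  by rewrite hornerZ hornerXn mulrCA exprVn -exprB ?unitfE // -ltnS.
rewrite coef_sum big_ord_recr /= coefZ coefXn subnn eqxx mulr1 big1 ?add0r.
  by move: P_monic; rewrite monicE lead_coefE sP => /eqP.
by move=> i _; rewrite coefZ coefXn eq_sym subn_eq0 leqNgt ltn_ord mulr0.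
Qed.

End Palindromic.

Section ClusterVariables.
Variable R : realFieldType.

Lemma sum_coefXn_wide (S : comNzRingType) (p : {poly S}) (n : nat) :
  (size p <= n)%N -> \sum_(i < n) (p`_i)%:P * 'X^i = p.
Proof.
move=> le_pn; transitivity (\poly_(i < n) p`_i).
  by rewrite poly_def; apply: eq_bigr => i _; rewrite mul_polyC.
apply/polyP => k; rewrite coef_poly; case: ltnP => // le_nk.
by rewrite nth_default // (leq_trans le_pn le_nk).
Qed.

Lemma peval_sum (P : {poly R}) (y : ratfun R) :
  peval P y = \sum_(i < size P) cst P`_i * y ^+ i.
Proof.
rewrite /peval (horner_coef_wide _ (size_poly _ _)).
by apply: eq_bigr => i _; rewrite coef_map_id0 // /cst !rmorph0.
Qed.

Lemma peval_X1 (P : {poly R}) : peval P (X1 R) = P%:P%:F.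
Proof.
rewrite -[in RHS](sum_coefXn_wide (leqnn (size P))) peval_sum !rmorph_sum /=.
by apply: eq_bigr => i _; rewrite /cst /X1 !(rmorphM, rmorphXn).
Qed.

Lemma peval_X2 (P : {poly R}) : peval P (X2 R) = (P^:P)%:F.
Proof.
rewrite -[in RHS](@sum_coefXn_wide _ (P^:P) (size P)) ?size_map_polyC //.
rewrite peval_sum rmorph_sum; apply: eq_bigr => i _.
by rewrite /cst /X2 rmorphM /= !rmorphXn coef_map.
Qed.

Variables P1 P2 : {poly R}.

Lemma clus0 : clus P1 P2 0 = P2%:P%:F / 'X%:F.
Proof. by rewrite /clus /= /Pk /= peval_X1. Qed.

Lemma clus1 : clus P1 P2 1 = 'Y%:F.
Proof. by []. Qed.

Lemma clus2 : clus P1 P2 2 = 'X%:F.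
Proof. by []. Qed.

Lemma clus3 : clus P1 P2 3 = (P1^:P)%:F / 'Y%:F.
Proof. by rewrite /clus /= /Pk /= peval_X2. Qed.

End ClusterVariables.

Section ClearingDenominators.
Variable R : realFieldType.
Implicit Types (U V W G : {poly {poly R}}).

Lemma mul_exprz_exprn (F : fieldType) (u : F) (z : int) (M : nat) :
  u != 0 -> 0 <= M%:Z + z -> u ^ z * u ^+ M = u ^+ absz (M%:Z + z).
Proof.
move=> u_neq0 Mz_ge0; rewrite -[u ^+ M]/(u ^ M%:Z) -expfzDr // addrC.
by rewrite -{1}(gez0_abs Mz_ge0).
Qed.

(* Multiply through by U^M V^M W^M, then pull the identity back along the
   injective map tofrac. *)
Lemma clear_denominators U V W G (a b : int) (I : eqType) (s : seq I)
    (r : I -> R) (e1 e2 : I -> int) (M : nat) :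
  U != 0 -> V != 0 -> W != 0 -> (absz a + absz b <= M)%N ->
  (forall t, t \in s -> (absz (e1 t) + absz (e2 t) <= M)%N) ->
  U%:F ^ (- a) * V%:F ^ (- b) * G%:F =
    \sum_(t <- s) cst (r t) * (W%:F / V%:F) ^ e1 t * U%:F ^ e2 t ->
  G * U ^+ absz (M%:Z - a) * V ^+ absz (M%:Z - b) * W ^+ M =
    \sum_(t <- s) (r t)%:P%:P * W ^+ absz (M%:Z + e1 t) * V ^+ absz (M%:Z - e1 t)
                  * U ^+ absz (M%:Z + e2 t).
Proof.
move=> U_neq0 V_neq0 W_neq0 abM eM E.
have [U'_neq0 V'_neq0 W'_neq0] : [/\ U%:F != 0, V%:F != 0 & W%:F != 0].
  by rewrite !tofrac_eq0.
apply/eqP; rewrite -tofrac_eq; apply/eqP.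
transitivity (U%:F ^ (- a) * V%:F ^ (- b) * G%:F * (U%:F ^+ M * V%:F ^+ M * W%:F ^+ M)).
  have -> : forall x y g u v w : ratfun R,
      x * y * g * (u * v * w) = g * (x * u) * (y * v) * w by move=> *; ring.
  have aM : 0 <= M%:Z + - a by lia.
  have bM : 0 <= M%:Z + - b by lia.
  rewrite (mul_exprz_exprn U'_neq0 aM) (mul_exprz_exprn V'_neq0 bM).
  by rewrite !rmorphM /= !rmorphXn.
rewrite E mulr_suml rmorph_sum; apply: eq_big_seq => t ts; have etM := eM t ts.
rewrite expfzMl exprz_inv.
have -> : forall d w v u x y z : ratfun R,
    d * (w * v) * u * (x * y * z) = d * (w * z) * (v * y) * (u * x) by move=> *; ring.
have [e1M e1M' e2M] : [/\ 0 <= M%:Z + e1 t, 0 <= M%:Z + - e1 t & 0 <= M%:Z + e2 t].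
  by split; lia.
rewrite (mul_exprz_exprn W'_neq0 e1M) (mul_exprz_exprn V'_neq0 e1M').
rewrite (mul_exprz_exprn U'_neq0 e2M).
by rewrite /cst !rmorphM /= !rmorphXn.
Qed.

(* H gathers the terms of the right-hand side that contribute to the
   coefficient of 'X^(sb + q). *)
Lemma cleared_coefX_cofactor (Q : {poly R}) G (sa sb M q : nat) (I : eqType)
    (s : seq I) (r : I -> R) (f1 f2 f3 : I -> nat) :
  (forall t, t \in s -> 0 <= r t) -> (forall t, t \in s -> f1 t + f2 t = M + M)%N ->
  (sb + q <= M + M)%N ->
  G * 'Y ^+ sa * 'X ^+ sb * Q%:P ^+ M =
    \sum_(t <- s) (r t)%:P%:P * Q%:P ^+ f1 t * 'X ^+ f2 t * 'Y ^+ f3 t ->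
  exists2 H : {poly R}, (forall j, 0 <= H`_j) &
    'X^sa * G`_q * Q ^+ M = Q ^+ (M + M - (sb + q)) * H.
Proof.
move=> r_ge0 f12 le_qM E; set n := (sb + q)%N.
exists (\sum_(t <- s | f2 t == n) r t *: 'X^(f3 t)).
  move=> j; rewrite coef_sum big_seq_cond; apply: sumr_ge0 => t /andP[ts _].
  by rewrite coefZ coefXn mulr_ge0 ?ler0n ?r_ge0.
have := congr1 (fun P : {poly {poly R}} => P`_n) E; rewrite -!rmorphXn /=.
have -> : G * ('X^sa)%:P * 'X^sb * (Q ^+ M)%:P = G * 'X^sb * ('X^sa * Q ^+ M)%:P.
  by rewrite polyCM !mulrA [G * _ * 'X^sb]mulrAC.
rewrite coefMC coefMXn ltnNge leq_addr /= addKn mulrA [_ * G`_q]mulrC => ->.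
rewrite coef_sum mulr_sumr [RHS]big_mkcond /=; apply: eq_big_seq => t ts.
rewrite mulrAC -!rmorphXn /= -!rmorphM /= coefCM coefXn eq_sym.
case: eqP => [f2n|_]; last by rewrite mulr0.
have -> : (M + M - n = f1 t)%N by rewrite -f2n -(f12 t ts) addnK.
by rewrite mulr1 -scalerAr mul_polyC scalerAl mulrC.
Qed.

End ClearingDenominators.

Section ExchangeBound.
Variable R : realFieldType.
Implicit Types (Q : {poly R}) (G : {poly {poly R}}) (c : nat -> nat -> R).

Lemma exponent_bound (I : eqType) (s : seq I) (e1 e2 : I -> int) (K : nat) :
  exists2 M : nat, (K <= M)%N &
    forall t, t \in s -> (absz (e1 t) + absz (e2 t) <= M)%N.
Proof.
exists (K + \max_(t <- s) (absz (e1 t) + absz (e2 t)))%N => [|t ts].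
  exact: leq_addr.
exact: leq_trans (leq_bigmax_seq _ ts (erefl true)) (leq_addl _ _).
Qed.

Lemma cleared_exchange_bound Q G c (a b : int) (I : eqType) (s : seq I)
    (r : I -> R) (e1 e2 : I -> int) (M p q : nat) :
  Q`_0 = 1 -> (forall i j, G`_j`_i = c i j) -> (forall t, t \in s -> 0 <= r t) ->
  (absz a + absz b + p + q <= M)%N -> (forall t, t \in s -> (absz (e1 t) <= M)%N) ->
  G * 'Y ^+ absz (M%:Z - a) * 'X ^+ absz (M%:Z - b) * Q%:P ^+ M =
    \sum_(t <- s) (r t)%:P%:P * Q%:P ^+ absz (M%:Z + e1 t) * 'X ^+ absz (M%:Z - e1 t)
                  * 'Y ^+ absz (M%:Z + e2 t) ->
  exchange_sum Q (fun z => cZ c z q) (b - q%:Z) p <= c p q.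
Proof.
move=> Q0 Gc r_ge0 abM e1M E.
have f12 t : t \in s -> (absz (M%:Z + e1 t)%R + absz (M%:Z - e1 t)%R = M + M)%N.
  by move=> ts; have := e1M t ts; lia.
have [|H H_ge0 EH] := cleared_coefX_cofactor (q := q) r_ge0 f12 _ E; first by lia.
rewrite -Gc; apply: (@exchange_sum_le_coef R Q _ H _ _ M _ p (b - q%:Z) Q0 _ EH H_ge0).
- by lia.
- by move=> n; rewrite /= Gc.
- by [].
Qed.

Lemma exchange_bound Q G c (a b : int) (I : eqType) (s : seq I)
    (r : I -> R) (e1 e2 : I -> int) :
  Q`_0 = 1 -> (forall i j, G`_j`_i = c i j) -> (forall t, t \in s -> 0 <= r t) ->
  'Y%:F ^ (- a) * 'X%:F ^ (- b) * G%:F =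
    \sum_(t <- s) cst (r t) * (Q%:P%:F / 'X%:F) ^ e1 t * 'Y%:F ^ e2 t ->
  forall p q : nat, exchange_sum Q (fun z => cZ c z q) (b - q%:Z) p <= c p q.
Proof.
move=> Q0 Gc r_ge0 E p q.
have [M abM eM] := exponent_bound s e1 e2 (absz a + absz b + p + q).
apply: (cleared_exchange_bound (e1 := e1) (e2 := e2) Q0 Gc r_ge0 abM) => [t ts|].
  by have := eM t ts; lia.
apply: clear_denominators E => //; last by lia.
- by rewrite polyC_eq0 polyX_eq0.
- by rewrite polyX_eq0.
- by rewrite polyC_eq0 coef0_eq1_neq0.
Qed.

Lemma exchange_bound_swap Q G c (a b : int) (I : eqType) (s : seq I)
    (r : I -> R) (e1 e2 : I -> int) :
  Q`_0 = 1 -> (forall i j, G`_j`_i = c i j) -> (forall t, t \in s -> 0 <= r t) ->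
  'X%:F ^ (- b) * 'Y%:F ^ (- a) * G%:F =
    \sum_(t <- s) cst (r t) * ((Q^:P)%:F / 'Y%:F) ^ e1 t * 'X%:F ^ e2 t ->
  forall p q : nat, exchange_sum Q (fun z => cZ c p z) (a - p%:Z) q <= c p q.
Proof.
move=> Q0 Gc r_ge0 E p q.
have [M abM eM] := exponent_bound s e1 e2 (absz b + absz a + q + p).
have abM' : (absz b + absz a <= M)%N by lia.
have X_neq0 : 'X != 0 :> {poly {poly R}} by rewrite polyX_eq0.
have Y_neq0 : 'Y != 0 :> {poly {poly R}} by rewrite polyC_eq0 polyX_eq0.
have QY_neq0 : Q^:P != 0 by rewrite map_polyC_eq0 coef0_eq1_neq0.
have E' := clear_denominators X_neq0 Y_neq0 QY_neq0 abM' eM E.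
apply: (@cleared_exchange_bound Q (swapXY G) (fun i j => c j i) b a I s r e1 e2 M q p
          Q0 _ r_ge0 abM).
- by move=> i j; rewrite coef_swapXY Gc.
- by move=> t ts; have := eM t ts; lia.
have := congr1 swapXY E'; rewrite !rmorphM /= !rmorphXn /=.
rewrite swapXY_X swapXY_Y swapXY_map_polyC => ->; rewrite rmorph_sum.
apply: eq_bigr => t _; rewrite !rmorphM /= !rmorphXn /=.
by rewrite swapXY_X swapXY_Y swapXY_map_polyC swapXY_polyC map_polyC.
Qed.

(* The case Q = 1 of exchange_bound, where the exchange sum is empty. *)
Lemma laurent_coef_ge0 G c (a b : int) (I : eqType) (s : seq I)
    (r : I -> R) (e1 e2 : I -> int) :
  (forall i j, G`_j`_i = c i j) -> (forall t, t \in s -> 0 <= r t) ->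
  'Y%:F ^ (- a) * 'X%:F ^ (- b) * G%:F =
    \sum_(t <- s) cst (r t) * 'Y%:F ^ e1 t * 'X%:F ^ e2 t ->
  forall p q : nat, 0 <= c p q.
Proof.
move=> Gc r_ge0 E p q; rewrite -(exchange_sum1 (fun z => cZ c z q) (b - q%:Z) p).
apply: (exchange_bound (Q := 1) (a := a) (b := b) (e1 := fun t => - e2 t) (e2 := e1)).
- exact: coefC.
- exact: Gc.
- exact: r_ge0.
rewrite E; apply: eq_bigr => t _.
by rewrite rmorph1 div1r exprz_inv opprK mulrAC.
Qed.

End ExchangeBound.

Section InitialExpansion.
Variables (R : realFieldType) (c : nat -> nat -> R) (N : nat).

Lemma coef_poly2 : (forall p q, (N <= p)%N \/ (N <= q)%N -> c p q = 0) ->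
  forall i j, (\poly_(j < N) \poly_(i < N) c i j)`_j`_i = c i j.
Proof.
move=> c_supp i j; rewrite coef_poly; case: (ltnP j N) => [_|Nj].
  by rewrite coef_poly; case: ltnP => // Ni; rewrite c_supp //; left.
by rewrite coef0 c_supp //; right.
Qed.

Lemma tofrac_poly2 :
  \sum_(p < N) \sum_(q < N) cst (c p q) * X1 R ^+ p * X2 R ^+ q =
    (\poly_(j < N) \poly_(i < N) c i j)%:F.
Proof.
rewrite poly_def rmorph_sum exchange_big /=; apply: eq_bigr => j _.
rewrite poly_def -mul_polyC rmorph_sum /= mulr_suml rmorph_sum; apply: eq_bigr => i _.
by rewrite /cst -mul_polyC !rmorphM /= !rmorphXn.
Qed.

End InitialExpansion.

Section ClusterBounds.
Variables (R : realFieldType) (P1 P2 : {poly R}) (G : {poly {poly R}}).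
Variables (c : nat -> nat -> R) (a1 a2 : int) (x : ratfun R).
Hypothesis Gc : forall i j, G`_j`_i = c i j.
Hypothesis xG : x = 'Y%:F ^ (- a1) * 'X%:F ^ (- a2) * G%:F.

Lemma Tnonneg1_coef_ge0 : Tnonneg P1 P2 1 x -> forall p q : nat, 0 <= c p q.
Proof.
case=> s [s_ge0 x_s]; apply: (laurent_coef_ge0 (a := a1) (b := a2) (r := fun t => t.1.1)
  (e1 := fun t => t.1.2) (e2 := fun t => t.2) Gc); first by move=> t /s_ge0[].
by rewrite -xG {}x_s clus1 clus2.
Qed.

Lemma Tnonneg0_exchange_bound : P2`_0 = 1 -> Tnonneg P1 P2 0 x ->
  forall p q : nat, exchange_sum P2 (fun z => cZ c z q) (a2 - q%:Z) p <= c p q.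
Proof.
move=> P2_0 [s [s_ge0 x_s]]; apply: (exchange_bound (a := a1) (r := fun t => t.1.1)
  (e1 := fun t => t.1.2) (e2 := fun t => t.2) P2_0 Gc); first by move=> t /s_ge0[].
by rewrite -xG {}x_s clus0 clus1.
Qed.

Lemma Tnonneg2_exchange_bound : P1`_0 = 1 -> Tnonneg P1 P2 2 x ->
  forall p q : nat, exchange_sum P1 (fun z => cZ c p z) (a1 - p%:Z) q <= c p q.
Proof.
move=> P1_0 [s [s_ge0 x_s]]; apply: (exchange_bound_swap (b := a2) (r := fun t => t.1.1)
  (e1 := fun t => t.2) (e2 := fun t => t.1.2) P1_0 Gc); first by move=> t /s_ge0[].
rewrite [_ ^ (- a2) * _]mulrC -xG {}x_s clus2 clus3.
by apply: eq_bigr => t _; rewrite mulrAC.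
Qed.

End ClusterBounds.

Unset Implicit Arguments.

Theorem proposition2p10 (R : realFieldType) (P1 P2 : {poly R})
  (P1_monic : P1 \is monic) (P2_monic : P2 \is monic)
  (P1_pos : forall i, 0 <= P1`_i) (P2_pos : forall i, 0 <= P2`_i)
  (P1_pal : forall z : R, z != 0 -> P1.[z] = z ^+ (size P1).-1 * P1.[z^-1])
  (P2_pal : forall z : R, z != 0 -> P2.[z] = z ^+ (size P2).-1 * P2.[z^-1])
  (a1 a2 : int) (c : nat -> nat -> R) (N : nat) (x : ratfun R)
  (c_supp : forall p q, (N <= p)%N \/ (N <= q)%N -> c p q = 0)
  (c_k : forall p q, ksub P1 P2 (c p q))
  (c_00 : c 0%N 0%N = 1)
  (x_def : x = X1 R ^ (- a1) * X2 R ^ (- a2) *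
               \sum_(p < N) \sum_(q < N) cst (c p q) * X1 R ^+ p * X2 R ^+ q)
  (x_T0 : Tnonneg P1 P2 0 x) (x_T1 : Tnonneg P1 P2 1 x)
  (x_T2 : Tnonneg P1 P2 2 x) :
  forall p q : nat,
    Num.max
      (pos_part (\sum_(1 <= k < p.+1)
         \sum_(ks : {ffun 'I_(size P2).-1 -> 'I_k.+1}
               | (\sum_(i < (size P2).-1) (ks i : nat) == k)%N)
           (-1) ^+ k.-1
           * cZ c (p%:Z - (\sum_(i < (size P2).-1) (i.+1 * ks i)%N)%:Z) q
           * (\prod_(i < (size P2).-1) P2`_i.+1 ^+ ks i)
           * multinom R (a2 - q%:Z + k%:Z - 1)
               [seq (ks i : nat) | i <- enum 'I_(size P2).-1]))
      (pos_part (\sum_(1 <= l < q.+1)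
         \sum_(ls : {ffun 'I_(size P1).-1 -> 'I_l.+1}
               | (\sum_(i < (size P1).-1) (ls i : nat) == l)%N)
           (-1) ^+ l.-1
           * cZ c p (q%:Z - (\sum_(i < (size P1).-1) (i.+1 * ls i)%N)%:Z)
           * (\prod_(i < (size P1).-1) P1`_i.+1 ^+ ls i)
           * multinom R (a1 - p%:Z + l%:Z - 1)
               [seq (ls i : nat) | i <- enum 'I_(size P1).-1]))
    <= c p q.
Proof.
move=> p q; set G := \poly_(j < N) \poly_(i < N) c i j.
have Gc := coef_poly2 c_supp.
have xG : x = 'Y%:F ^ (- a1) * 'X%:F ^ (- a2) * G%:F by rewrite x_def tofrac_poly2.
rewrite /pos_part !ge_max (Tnonneg1_coef_ge0 Gc xG x_T1) !andbT.
apply/andP; split.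
  exact: (Tnonneg0_exchange_bound Gc xG (palindromic_coef0 P2_monic P2_pal) x_T0).
exact: (Tnonneg2_exchange_bound Gc xG (palindromic_coef0 P1_monic P1_pal) x_T2).
Qed.
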